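(* Fix $n\ge3$ and $M>0$ satisfying (A) and (B). In the environment $\Gamma^0$ there exists an SCF $f^*:V^n\to[0,1]$ that is anonymous and BIC in $\Gamma^0$ and satisfies $W^0(f^* )>W^0(f^{(n)})$.
   Context: Fix $n\ge 3$ agents $N=\{1,\dots,n\}$, choosing between Reform $R$ (agent $i$'s utility $v_i$) and Status quo $S$ (utility $0$). Let $M>0$ satisfy (A): $\frac{2}{n}\left[-M^2+M+n-2\right]+\frac{n-2}{n}\left[2M+n-4\right]<0$, and (B): $2M-(n-2)>0$. Let $V=\{-M^2,-1,1,M\}$. For $\epsilon\in[0,1/4]$, the environment $\Gamma^\epsilon$ has independent values $\tilde v_1,\dots,\tilde v_n$ with distributions: for agents $1,2$: $\Pr(-M^2)=0.5-\epsilon$, $\Pr(-1)=\epsilon$, $\Pr(1)=\epsilon$, $\Pr(M)=0.5-\epsilon$; for agents $3,\dots,n$: $\Pr(-M^2)=\epsilon$, $\Pr(-1)=0.5-\epsilon$, $\Pr(1)=0.5-\epsilon$, $\Pr(M)=\epsilon$. (In particular, in $\Gamma^0$ agents 1,2 take values in $\{-M^2,M\}$ and agents $3,\dots,n$ in $\{-1,1\}$, each with probability $1/2$.) An SCF is any $f:V^n\to[0,1]$, defined on all of $V^n$ (including zero-probability profiles). $f$ is anonymous if $f(v)=f(\pi v)$ for all $v\in V^n$ and permutations $\pi$ of $N$, where $\pi v=(v_{\pi(1)},\dots,v_{\pi(n)})$. $f$ is BIC in $\Gamma^\epsilon$ if for every agent $i$ and all reports $v_i,v_i'\in V$: $v_i\,\mathbb{E}^\epsilon(f(v_i,\tilde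 v_{-i}))\ge v_i\,\mathbb{E}^\epsilon(f(v_i',\tilde v_{-i}))$, expectation over $\tilde v_{-i}$ under $\Gamma^\epsilon$. For $v\in V^n$, $\chi(v)=\{i: v_i>0\}$; the unanimity rule is $f^{(n)}(v)=1$ if $|\chi(v)|=n$ and $0$ otherwise. $W^\epsilon(f)=\mathbb{E}^\epsilon\big(f(\tilde v)\sum_i\tilde v_i\big)$. *)

From mathcomp Require Import all_boot all_order all_algebra all_fingroup.
Set Implicit Arguments. Unset Strict Implicit. Unset Printing Implicit Defensive.
Import Order.TTheory GRing.Theory Num.Theory.
Local Open Scope ring_scope.

(* Values V = {-M^2, -1, 1, M} are indexed by 'I_4 : 0 |-> -M^2, 1 |-> -1,
   2 |-> 1, 3 |-> M.  (Under (A) one has M <> 1, so these four reals are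
   distinct and the indexing is a bijection.)  Agents N = {1..n} are 'I_n,
   agent k+1 being the ordinal k. *)
Definition profile (n : nat) := {ffun 'I_n -> 'I_4}.

Section Env.
Variable R : realFieldType.
Variable n : nat.
Variable M : R.

Definition value (k : 'I_4) : R :=
  match val k with
  | 0%N => - M ^+ 2
  | 1%N => -1
  | 2%N => 1
  | _ => M
  end.

Definition prob (eps : R) (i : 'I_n) (k : 'I_4) : R :=
  if (val i < 2)%N then
    match val k with
    | 0%N => 1/2 - eps | 1%N => eps | 2%N => eps | _ => 1/2 - eps end
  else
    match val k with
    | 0%N => eps | 1%N => 1/2 - eps | 2%N => 1/2 - eps | _ => eps end.

Definition prof_prob (eps : R) (v : profile n) : R :=
  \prod_(j : 'I_n) prob eps j (v j).

Definition interim (eps : R) (f : profile n -> R) (i : 'I_n) (k : 'I_4) : R :=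
  \sum_(v : profile n | v i == k) (\prod_(j : 'I_n | j != i) prob eps j (v j)) * f v.

Definition is_SCF (f : profile n -> R) : Prop :=
  forall v, 0 <= f v <= 1.

Definition permute (p : {perm 'I_n}) (v : profile n) : profile n :=
  [ffun i => v (p i)].

Definition anonymous (f : profile n -> R) : Prop :=
  forall (v : profile n) (p : {perm 'I_n}), f v = f (permute p v).

Definition BIC (eps : R) (f : profile n -> R) : Prop :=
  forall (i : 'I_n) (k k' : 'I_4),
    value k * interim eps f i k' <= value k * interim eps f i k.

Definition chi (v : profile n) : {set 'I_n} := [set i | 0 < value (v i)].

Definition unanimity (v : profile n) : R :=
  if #|chi v| == n then 1 else 0.

Definition welfare (eps : R) (f : profile n -> R) : R :=
  \sum_(v : profile n) prof_prob eps v * (f v * \sum_(i : 'I_n) value (v i)).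

End Env.

Definition condA (R : realFieldType) (n : nat) (M : R) : Prop :=
  (2 / n%:R) * (- M ^+ 2 + M + n%:R - 2)
  + ((n%:R - 2) / n%:R) * (2 * M + n%:R - 4) < 0.

Definition condB (R : realFieldType) (n : nat) (M : R) : Prop :=
  2 * M - (n%:R - 2) > 0.

(* In Gamma^0 agents 1 and 2 take values in {-M^2, M} and agents 3..n in {-1, 1}.
   Besides the unanimous profiles, f* adopts the reform with probability 1/(n-2) when
   exactly one of agents 3..n opposes it and agents 1, 2 report M; on the support such
   profiles have total value 2M + n - 4 > 0 by (B), whence the welfare gain.  This lottery
   tempts agents 3..n to report -1, so f* also reforms on two kinds of profiles outside the
   support (surely with one -M^2 and no M, with probability 1/(n-2) with three -M^2),
   chosen so that every agent's interim probability of reform, times 2^(n-1), takes only two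
   values, the higher one on the positive reports: 2 and 0 for agents 1 and 2, and
   1 + (n-3)/(n-2) and 1/(n-2) for the others.  Such a two-level rule satisfies every
   incentive constraint, including those of the zero-probability values. *)

From mathcomp Require Import all_boot all_order all_algebra all_fingroup.
From mathcomp Require Import zify lra.
Import Order.TTheory GRing.Theory Num.Theory.
Local Open Scope ring_scope.

Set Implicit Arguments. Unset Strict Implicit.

Definition negM2 : 'I_4 := @Ordinal 4 0 isT.
Definition neg1 : 'I_4 := @Ordinal 4 1 isT.
Definition pos1 : 'I_4 := @Ordinal 4 2 isT.
Definition posM : 'I_4 := @Ordinal 4 3 isT.

Definition positive (k : 'I_4) : bool := (k == pos1) || (k == posM).

Lemma type_ind (P : 'I_4 -> Prop) :
  P negM2 -> P neg1 -> P pos1 -> P posM -> forall k, P k.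
Proof.
move=> P0 P1 P2 P3 [[|[|[|[|m]]]] lt_m4] //.
- by rewrite (_ : Ordinal _ = negM2) //; apply/val_inj.
- by rewrite (_ : Ordinal _ = neg1) //; apply/val_inj.
- by rewrite (_ : Ordinal _ = pos1) //; apply/val_inj.
- by rewrite (_ : Ordinal _ = posM) //; apply/val_inj.
Qed.

Lemma eq_or_neqr (T : eqType) (y a b : T) : (y == a) || (y == b) -> y != b -> y = a.
Proof. by case/orP=> /eqP ->; rewrite ?eqxx. Qed.

Lemma eq_or_neql (T : eqType) (y a b : T) : (y == a) || (y == b) -> y != a -> y = b.
Proof. by case/orP=> /eqP ->; rewrite ?eqxx. Qed.

Lemma sumr_indicator (R : pzSemiRingType) (T : finType) (P b : pred T) :
  \sum_(v | P v) ((b v)%:R : R) = #|[set v | P v && b v]|%:R.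
Proof.
rewrite -sum1_card natr_sum [RHS]big_mkcond [LHS]big_mkcond /=.
by apply: eq_bigr => v _; rewrite inE; case: (P v); case: (b v).
Qed.

Lemma sum_I4 (R : nmodType) (G : 'I_4 -> R) :
  \sum_(x : 'I_4) G x = G negM2 + G neg1 + G pos1 + G posM.
Proof.
rewrite !big_ord_recl big_ord0 addr0 !addrA.
by congr (_ + _ + _ + _); congr G; apply/val_inj.
Qed.

Section Construction.
Variable R : realFieldType.
Variable n : nat.
Hypothesis n_ge3 : (3 <= n)%N.
Implicit Types (i j l : 'I_n) (k x : 'I_4) (v : profile n).

Definition mult (x : 'I_4) (v : profile n) : nat := #|[set j | v j == x]|.

Definition sure_reform (v : profile n) : bool :=
  (mult neg1 v == 0%N) &&
  ((mult negM2 v == 0%N) || ((mult negM2 v == 1%N) && (mult posM v == 0%N))).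

Definition lottery_reform (v : profile n) : bool :=
  ((mult negM2 v == 0%N) && (mult neg1 v == 1%N) && (2 <= mult posM v)%N)
  || ((mult negM2 v == 3%N) && (mult neg1 v == 0%N)).

Definition lottery_weight : R := ((n - 2)%N%:R)^-1.

Definition fstar (v : profile n) : R :=
  (sure_reform v)%:R + lottery_weight * (lottery_reform v)%:R.

Lemma mult_permute x p v : mult x (permute p v) = mult x v.
Proof.
rewrite /mult -[RHS](card_preimset _ (@perm_inj _ p)); apply: eq_card => j.
by rewrite !inE /permute ffunE.
Qed.

Lemma fstar_anonymous : anonymous fstar.
Proof. by move=> v p; rewrite /fstar /sure_reform /lottery_reform !mult_permute. Qed.

Lemma sure_lottery_disjoint v : sure_reform v -> lottery_reform v = false.
Proof.
rewrite /lottery_reform => /andP[/eqP-> /orP[/eqP-> // | /andP[/eqP-> _]]].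
by rewrite andbF.
Qed.

Lemma lottery_weight_gt0 : 0 < lottery_weight.
Proof. rewrite /lottery_weight invr_gt0 ltr0n; lia. Qed.

Lemma lottery_weight_le1 : lottery_weight <= 1.
Proof. rewrite /lottery_weight invf_le1 ?ler1n ?ltr0n; lia. Qed.

Lemma fstar_SCF : is_SCF fstar.
Proof.
move=> v; rewrite /fstar; case sure: (sure_reform v).
  by rewrite sure_lottery_disjoint // mulr0 addr0 ler01 lexx.
rewrite add0r; case: (lottery_reform v); rewrite ?mulr1 ?mulr0 ?lexx ?ler01 //.
by rewrite (ltW lottery_weight_gt0) lottery_weight_le1.
Qed.

Definition supp_type (j : 'I_n) (x : 'I_4) : bool :=
  if (j < 2)%N then (x == negM2) || (x == posM) else (x == neg1) || (x == pos1).

Definition supp_others (i : 'I_n) (v : profile n) : bool :=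
  [forall (j | j != i), supp_type j (v j)].

Definition supp_profile (v : profile n) : bool := [forall j, supp_type j (v j)].

Lemma prob0E j x : prob (0 : R) j x = if supp_type j x then 2^-1 else 0.
Proof.
rewrite /prob /supp_type; case: (j < 2)%N; case: x => [[|[|[|[|?]]]] ?] //=;
  by rewrite ?subr0 ?mul1r.
Qed.

Lemma prod_prob0E (P : pred 'I_n) (v : profile n) :
  \prod_(j | P j) prob (0 : R) j (v j) =
  if [forall (j | P j), supp_type j (v j)] then (2^-1) ^+ #|P| else 0.
Proof.
case: ifPn => [/forallP supp | /forallPn[j]]; last first.
  by rewrite negb_imply => /andP[Pj /negbTE unsupp]; rewrite (bigD1 j) //= prob0E unsupp mul0r.
rewrite -prodr_const; apply: eq_bigr => j Pj.
by rewrite prob0E; move/implyP: (supp j) => ->.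
Qed.

Lemma interim0E (f : profile n -> R) i k :
  interim 0 f i k = (2^-1) ^+ n.-1 * \sum_(v : profile n | (v i == k) && supp_others i v) f v.
Proof.
rewrite /interim [RHS]mulr_sumr big_mkcondr /=; apply: eq_bigr => v _.
by rewrite prod_prob0E (cardC1 i) card_ord /supp_others; case: ifP; rewrite ?mul0r.
Qed.

Lemma welfare0E (M : R) (f : profile n -> R) :
  welfare M 0 f =
  (2^-1) ^+ n * \sum_(v : profile n | supp_profile v) f v * \sum_i value M (v i).
Proof.
rewrite /welfare mulr_sumr [RHS]big_mkcond /=; apply: eq_bigr => v _.
rewrite /prof_prob prod_prob0E (_ : #|xpredT| = n) ?card_ord //.
by case: ifP => supp; rewrite /supp_profile supp ?mul0r ?mulrA.
Qed.

Definition agentsA : {set 'I_n} := [set j : 'I_n | (j < 2)%N].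
Definition agentsB : {set 'I_n} := ~: agentsA.

Definition agent1 : 'I_n := Ordinal (leq_trans (isT : (1 <= 3)%N) n_ge3).
Definition agent2 : 'I_n := Ordinal (leq_trans (isT : (2 <= 3)%N) n_ge3).
Definition agent3 : 'I_n := Ordinal n_ge3.

Definition partner (i : 'I_n) : 'I_n := if i == agent1 then agent2 else agent1.

Lemma in_agentsA j : (j \in agentsA) = (j < 2)%N.
Proof. by rewrite inE. Qed.

Lemma card_agentsA : #|agentsA| = 2%N.
Proof.
rewrite (_ : agentsA = [set agent1; agent2]) ?cards2 //.
by apply/setP => -[[|[|j]] lt_jn]; rewrite !inE.
Qed.

Lemma card_agentsB : #|agentsB| = (n - 2)%N.
Proof. have := cardsC agentsA; rewrite card_agentsA card_ord /agentsB; lia. Qed.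

Lemma card_agentsAD1 i : (i < 2)%N -> #|agentsA :\ i| = 1%N.
Proof. by move=> Ai; have := cardsD1 i agentsA; rewrite card_agentsA in_agentsA Ai => -[]. Qed.

Lemma card_agentsBD1 i : #|agentsB :\ i| = (n - 2 - ~~ (i < 2)%N)%N.
Proof. by have := cardsD1 i agentsB; rewrite card_agentsB !inE => ->; rewrite addKn. Qed.

Lemma partnerA i : (partner i < 2)%N.
Proof. by rewrite /partner; case: ifP. Qed.

Lemma partner_neq i : (i < 2)%N -> partner i != i.
Proof. by rewrite /partner; case: i => [[|[|m]] lt_mn]. Qed.

Lemma partner_uniq i j : (i < 2)%N -> (j < 2)%N -> j != i -> j = partner i.
Proof.
by rewrite /partner; case: i => [[|[|m]] ?] //= _; case: j => [[|[|m']] ?] //= _ _;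
  apply/val_inj.
Qed.

Lemma neq_agentA i j : ~~ (i < 2)%N -> (j < 2)%N -> j != i.
Proof. by move=> Bi Aj; apply: contraNneq Bi => <-. Qed.

Lemma mult_eq0 x v : (mult x v == 0%N) = [forall j, v j != x].
Proof.
rewrite cards_eq0; apply/eqP/forallP => [empty j | neq].
  by apply/negP => vj; have := in_set0 j; rewrite -empty inE vj.
by apply/setP => j; rewrite !inE (negbTE (neq j)).
Qed.

Lemma mult0_neq x v : mult x v = 0%N -> forall j, v j != x.
Proof. by move/eqP; rewrite mult_eq0 => /forallP. Qed.

Lemma neq_mult0 x v : (forall j, v j != x) -> mult x v = 0%N.
Proof. by move=> neq; apply/eqP; rewrite mult_eq0; apply/forallP. Qed.

Lemma mult1P x v : mult x v = 1%N -> exists l, forall j, (v j == x) = (j == l).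
Proof.
move=> /eqP /cards1P [l vl]; exists l => j.
by have := congr1 (fun A : {set 'I_n} => j \in A) vl; rewrite !inE.
Qed.

Lemma mult_setE x (v : profile n) (A : {set 'I_n}) :
  (forall j, (v j == x) = (j \in A)) -> mult x v = #|A|.
Proof. by move=> vA; apply: eq_card => j; rewrite inE vA. Qed.

Lemma mult_le_card x (v : profile n) (A : {set 'I_n}) :
  (forall j, v j = x -> j \in A) -> (mult x v <= #|A|)%N.
Proof. by move=> vA; apply/subset_leq_card/subsetP => j; rewrite inE => /eqP /vA. Qed.

Lemma agentsA_mult_ge2 x (v : profile n) :
  (forall j : 'I_n, (j < 2)%N -> v j = x) -> (2 <= mult x v)%N.
Proof.
move=> vA; apply: (@leq_trans #|[set agent1; agent2]|); first by rewrite cards2.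
by apply/subset_leq_card/subsetP => j; rewrite !inE => /orP[] /eqP->; rewrite vA.
Qed.

Lemma supp_othersP i v j : supp_others i v -> j != i -> supp_type j (v j).
Proof. by move=> /forallP /(_ j) /implyP. Qed.

Lemma supp_othersA i v j : supp_others i v -> j != i -> (j < 2)%N ->
  (v j == negM2) || (v j == posM).
Proof. by move=> supp ji Aj; have := supp_othersP supp ji; rewrite /supp_type Aj. Qed.

Lemma supp_othersB i v j : supp_others i v -> j != i -> ~~ (j < 2)%N ->
  (v j == neg1) || (v j == pos1).
Proof. by move=> supp ji Bj; have := supp_othersP supp ji; rewrite /supp_type (negbTE Bj). Qed.

Lemma supp_others_inA i v j : supp_others i v -> j != i ->
  (v j == negM2) || (v j == posM) -> (j < 2)%N.
Proof.
move=> supp ji; have := supp_othersP supp ji; rewrite /supp_type.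
by case: (j < 2)%N => //; case: (v j) => [[|[|[|[|?]]]] ?].
Qed.

Lemma supp_others_inB i v j : supp_others i v -> j != i -> v j == neg1 -> ~~ (j < 2)%N.
Proof.
move=> supp ji; have := supp_othersP supp ji; rewrite /supp_type.
by case: (j < 2)%N => //; case: (v j) => [[|[|[|[|?]]]] ?].
Qed.

Lemma supp_othersB_negM2 i v : ~~ (i < 2)%N -> supp_others i v -> mult posM v = 0%N ->
  forall j : 'I_n, (j < 2)%N -> v j = negM2.
Proof.
move=> Bi supp c_posM j Aj.
exact: eq_or_neqr (supp_othersA supp (neq_agentA Bi Aj) Aj) (mult0_neq c_posM j).
Qed.

Lemma mult_le2A i v x : supp_others i v -> (i < 2)%N || (v i != x) ->
  (x == negM2) || (x == posM) -> (mult x v <= 2)%N.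
Proof.
move=> supp Ai Ax; rewrite -card_agentsA; apply: mult_le_card => j vj; rewrite in_agentsA.
have [ji | /eqP ji] := j =P i; first by move: Ai; rewrite -ji vj eqxx orbF.
by apply: (supp_others_inA supp ji); rewrite vj.
Qed.

Lemma mult_le1A i v x : (i < 2)%N -> supp_others i v -> v i != x ->
  (x == negM2) || (x == posM) -> (mult x v <= 1)%N.
Proof.
move=> Ai supp vi Ax; rewrite -(card_agentsAD1 Ai); apply: mult_le_card => j vj; rewrite !inE.
have [ji | /eqP ji] := j =P i; first by move: vi; rewrite -ji vj eqxx.
by apply: (supp_others_inA supp ji); rewrite vj.
Qed.

Definition event_at (c : pred (profile n)) i k : {set profile n} :=
  [set v : profile n | [&& v i == k, supp_others i v & c v]].

Lemma event_atP (c : pred (profile n)) i k v :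
  reflect [/\ v i = k, supp_others i v & c v] (v \in event_at c i k).
Proof. by rewrite inE; apply: (iffP and3P) => -[/eqP]. Qed.

Definition pos_prof i k : profile n :=
  [ffun j => if j == i then k else if (j < 2)%N then posM else pos1].
Definition negA_prof i k : profile n :=
  [ffun j => if j == i then k else if (j < 2)%N then negM2 else pos1].
Definition neg1_prof i k l : profile n :=
  [ffun j => if j == i then k else if j == l then neg1
             else if (j < 2)%N then posM else pos1].

Lemma supp_others_pos_prof i k : supp_others i (pos_prof i k).
Proof.
apply/forallP => j; apply/implyP => ji; rewrite /supp_type ffunE (negbTE ji).
by case: (j < 2)%N.
Qed.

Lemma supp_others_negA_prof i k : supp_others i (negA_prof i k).
Proof.
apply/forallP => j; apply/implyP => ji; rewrite /supp_type ffunE (negbTE ji).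
by case: (j < 2)%N.
Qed.

Lemma supp_others_neg1_prof i k l : ~~ (l < 2)%N -> supp_others i (neg1_prof i k l).
Proof.
move=> Bl; apply/forallP => j; apply/implyP => ji; rewrite /supp_type ffunE (negbTE ji).
by case: (j =P l) => [->|_]; [rewrite (negbTE Bl) | case: (j < 2)%N].
Qed.

Lemma mult_pos_prof_negM2 i k : k != negM2 -> mult negM2 (pos_prof i k) = 0%N.
Proof. by move=> k0; apply: neq_mult0 => j; rewrite ffunE; case: (j == i); case: (j < 2)%N. Qed.

Lemma mult_pos_prof_neg1 i k : k != neg1 -> mult neg1 (pos_prof i k) = 0%N.
Proof. by move=> k1; apply: neq_mult0 => j; rewrite ffunE; case: (j == i); case: (j < 2)%N. Qed.

Lemma pos_profE i k v : v i = k -> supp_others i v ->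
  mult negM2 v = 0%N -> mult neg1 v = 0%N -> v = pos_prof i k.
Proof.
move=> vi supp c_negM2 c_neg1; apply/ffunP => j; rewrite ffunE.
have [->//|/eqP ji] := j =P i; case: ifP => Aj.
  exact: eq_or_neql (supp_othersA supp ji Aj) (mult0_neq c_negM2 j).
exact: eq_or_neql (supp_othersB supp ji (negbT Aj)) (mult0_neq c_neg1 j).
Qed.

Lemma card_neg1_prof i k : #|neg1_prof i k @: (agentsB :\ i)| = #|agentsB :\ i|.
Proof.
apply: card_in_imset => l1 l2; rewrite !inE => /andP[l1i _] _ E.
have := congr1 (fun w : profile n => w l1) E; rewrite !ffunE (negbTE l1i) eqxx.
by case: (l1 =P l2) => // _; case: (l1 < 2)%N.
Qed.

Lemma sure_neg1 i : event_at sure_reform i neg1 = set0.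
Proof.
apply/setP => v; rewrite in_set0; apply/event_atP => -[vi _ /andP[/eqP c_neg1 _]].
by have := mult0_neq c_neg1 i; rewrite vi eqxx.
Qed.

Section AgentA.
Variable i : 'I_n.
Hypothesis Ai : (i < 2)%N.

Lemma sure_negM2A : event_at sure_reform i negM2 = set0.
Proof.
apply/setP => v; rewrite in_set0; apply/event_atP => -[vi supp].
case/andP=> _ /orP[/eqP c_negM2 | /andP[/eqP c_negM2 /eqP c_posM]].
  by have := mult0_neq c_negM2 i; rewrite vi eqxx.
suff : (2 <= mult negM2 v)%N by rewrite c_negM2.
apply: agentsA_mult_ge2 => j Aj; have [->//|ji] := eqVneq j i.
rewrite (partner_uniq Ai Aj ji).
exact: eq_or_neqr (supp_othersA supp (partner_neq Ai) (partnerA i)) (mult0_neq c_posM _).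
Qed.

Lemma lottery_negM2A : event_at lottery_reform i negM2 = set0.
Proof.
apply/setP => v; rewrite in_set0; apply/event_atP => -[vi supp].
case/orP=> [/andP[/andP[/eqP c_negM2 _] _] | /andP[/eqP c_negM2 _]].
  by have := mult0_neq c_negM2 i; rewrite vi eqxx.
by have := @mult_le2A i v negM2 supp; rewrite Ai c_negM2 => /(_ isT isT).
Qed.

Lemma lottery_neg1A : event_at lottery_reform i neg1 = set0.
Proof.
apply/setP => v; rewrite in_set0; apply/event_atP => -[vi supp].
case/orP=> [/andP[_ c_posM] | /andP[_ /eqP c_neg1]].
  by have := @mult_le1A i v posM Ai supp; rewrite vi => /(_ isT isT); case: mult c_posM => [|[|]].
by have := mult0_neq c_neg1 i; rewrite vi eqxx.
Qed.

Lemma sure_pos1A : event_at sure_reform i pos1 = [set pos_prof i pos1; negA_prof i pos1].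
Proof.
apply/setP => v; apply/idP/idP.
  case/event_atP => vi supp; rewrite !inE.
  case/andP=> /eqP c_neg1 /orP[/eqP c_negM2 | /andP[/eqP c_negM2 /eqP c_posM]].
    by rewrite (pos_profE vi supp c_negM2 c_neg1) eqxx.
  apply/orP; right; apply/eqP/ffunP => j; rewrite ffunE.
  have [->//|/eqP ji] := j =P i; case: ifP => Aj.
    exact: eq_or_neqr (supp_othersA supp ji Aj) (mult0_neq c_posM j).
  exact: eq_or_neql (supp_othersB supp ji (negbT Aj)) (mult0_neq c_neg1 j).
rewrite !inE => /orP[] /eqP->; rewrite ffunE eqxx /=.
  by rewrite supp_others_pos_prof /sure_reform mult_pos_prof_negM2 // mult_pos_prof_neg1.
rewrite supp_others_negA_prof /sure_reform.
have -> : mult neg1 (negA_prof i pos1) = 0%N.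
  by apply: neq_mult0 => j; rewrite ffunE; case: (j == i); case: (j < 2)%N.
have -> : mult posM (negA_prof i pos1) = 0%N.
  by apply: neq_mult0 => j; rewrite ffunE; case: (j == i); case: (j < 2)%N.
rewrite (@mult_setE _ _ [set partner i]) ?cards1 ?orbT // => j; rewrite ffunE inE.
have [->|/eqP ji] := j =P i; first by apply/esym/negbTE; rewrite eq_sym partner_neq.
have [Aj|Bj] := boolP (j < 2)%N; first by rewrite -(partner_uniq Ai Aj ji) !eqxx.
by apply/esym/eqP => E; move: Bj; rewrite E partnerA.
Qed.

Lemma lottery_pos1A : event_at lottery_reform i pos1 = set0.
Proof.
apply/setP => v; rewrite in_set0; apply/event_atP => -[vi supp].
case/orP=> [/andP[_ c_posM] | /andP[/eqP c_negM2 _]].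
  by have := @mult_le1A i v posM Ai supp; rewrite vi => /(_ isT isT); case: mult c_posM => [|[|]].
by have := @mult_le1A i v negM2 Ai supp; rewrite vi c_negM2 => /(_ isT isT).
Qed.

End AgentA.

Section AgentB.
Variable i : 'I_n.
Hypothesis Bi : ~~ (i < 2)%N.

Lemma sure_negM2B : event_at sure_reform i negM2 = set0.
Proof.
apply/setP => v; rewrite in_set0; apply/event_atP => -[vi supp].
case/andP=> _ /orP[/eqP c_negM2 | /andP[/eqP c_negM2 /eqP c_posM]].
  by have := mult0_neq c_negM2 i; rewrite vi eqxx.
by have := agentsA_mult_ge2 (supp_othersB_negM2 Bi supp c_posM); rewrite c_negM2.
Qed.

Lemma lottery_negM2B : event_at lottery_reform i negM2 = [set negA_prof i negM2].
Proof.
apply/setP => v; apply/idP/idP.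
  case/event_atP => vi supp; rewrite !inE.
  case/orP=> [/andP[/andP[/eqP c_negM2 _] _] | /andP[/eqP c_negM2 /eqP c_neg1]].
    by have := mult0_neq c_negM2 i; rewrite vi eqxx.
  apply/eqP/ffunP => j; rewrite ffunE.
  have [->//|/eqP ji] := j =P i; case: ifP => Aj; last first.
    exact: eq_or_neql (supp_othersB supp ji (negbT Aj)) (mult0_neq c_neg1 j).
  case/orP: (supp_othersA supp ji Aj) => /eqP // vj; exfalso.
  suff : (mult negM2 v <= #|[set i; partner j]|)%N.
    by rewrite c_negM2 cards2; case: (i != partner j).
  apply: mult_le_card => j' vj'; rewrite !inE; have [//|/eqP j'i /=] := j' =P i.
  have Aj' : (j' < 2)%N by apply: (supp_others_inA supp j'i); rewrite vj'.
  have j'j : j' != j by apply: contra_eqN vj' => /eqP->; rewrite vj.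
  by rewrite -(partner_uniq Aj Aj' j'j).
rewrite !inE => /eqP->; rewrite ffunE eqxx supp_others_negA_prof /= /lottery_reform.
have -> : mult neg1 (negA_prof i negM2) = 0%N.
  by apply: neq_mult0 => j; rewrite ffunE; case: (j == i); case: (j < 2)%N.
rewrite (@mult_setE _ _ (i |: agentsA)) ?cardsU1 ?card_agentsA ?in_agentsA ?(negbTE Bi) // => j.
by rewrite ffunE !inE; case: (j == i); case: (j < 2)%N.
Qed.

Lemma lottery_neg1B : event_at lottery_reform i neg1 = [set pos_prof i neg1].
Proof.
apply/setP => v; apply/idP/idP.
  case/event_atP => vi supp; rewrite !inE.
  case/orP=> [/andP[/andP[/eqP c_negM2 /eqP c_neg1] _] | /andP[_ /eqP c_neg1]]; last first.
    by have := mult0_neq c_neg1 i; rewrite vi eqxx.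
  have [l vl] := mult1P c_neg1.
  have li : i = l by apply/eqP; rewrite -vl vi.
  apply/eqP/ffunP => j; rewrite ffunE.
  have [->//|/eqP ji] := j =P i; case: ifP => Aj.
    exact: eq_or_neql (supp_othersA supp ji Aj) (mult0_neq c_negM2 j).
  by apply: eq_or_neql (supp_othersB supp ji (negbT Aj)) _; rewrite vl -li.
rewrite !inE => /eqP->; rewrite ffunE eqxx supp_others_pos_prof /= /lottery_reform.
rewrite mult_pos_prof_negM2 // agentsA_mult_ge2 => [|j Aj]; last first.
  by rewrite ffunE (negbTE (neq_agentA Bi Aj)) Aj.
rewrite (@mult_setE _ _ [set i]) ?cards1 // => j; rewrite ffunE inE.
by case: (j == i); case: (j < 2)%N.
Qed.

End AgentB.

Section PositiveReport.
Variable i : 'I_n.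
Variable k : 'I_4.
Hypothesis supp_posk : (k == posM) || (k == pos1) && ~~ (i < 2)%N.

Lemma sure_pos : event_at sure_reform i k = [set pos_prof i k].
Proof.
apply/setP => v; apply/idP/idP.
  case/event_atP => vi supp; rewrite !inE.
  case/andP=> /eqP c_neg1 /orP[/eqP c_negM2 | /andP[/eqP c_negM2 /eqP c_posM]].
    by rewrite (pos_profE vi supp c_negM2 c_neg1).
  exfalso; case/orP: supp_posk => [/eqP k3 | /andP[_ Bi]].
    by have := mult0_neq c_posM i; rewrite vi k3 eqxx.
  by have := agentsA_mult_ge2 (supp_othersB_negM2 Bi supp c_posM); rewrite c_negM2.
rewrite !inE => /eqP->; rewrite ffunE eqxx supp_others_pos_prof /= /sure_reform.
by rewrite mult_pos_prof_negM2 ?mult_pos_prof_neg1 //; case/orP: supp_posk => [|/andP[]] /eqP->.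
Qed.

Lemma lottery_pos : event_at lottery_reform i k = neg1_prof i k @: (agentsB :\ i).
Proof.
have k0 : k != negM2 by case/orP: supp_posk => [|/andP[]] /eqP->.
have k1 : k != neg1 by case/orP: supp_posk => [|/andP[]] /eqP->.
apply/setP => v; apply/idP/idP.
  case/event_atP => vi supp.
  case/orP=> [/andP[/andP[/eqP c_negM2 /eqP c_neg1] _] | /andP[/eqP c_negM2 _]]; last first.
    by have := @mult_le2A i v negM2 supp; rewrite c_negM2 vi k0 orbT => /(_ isT isT).
  have [l vl] := mult1P c_neg1.
  have li : l != i by apply/eqP => li; have := vl i; rewrite vi -li eqxx (negbTE k1).
  have Bl : ~~ (l < 2)%N by apply: (supp_others_inB supp li); rewrite vl.
  apply/imsetP; exists l; first by rewrite !inE li.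
  apply/ffunP => j; rewrite ffunE.
  have [->//|/eqP ji] := j =P i; have [->|/eqP jl] := j =P l; first by apply/eqP; rewrite vl.
  case: ifP => Aj.
    exact: eq_or_neql (supp_othersA supp ji Aj) (mult0_neq c_negM2 j).
  by apply: eq_or_neql (supp_othersB supp ji (negbT Aj)) _; rewrite vl.
case/imsetP => l; rewrite !inE => /andP[li Bl] ->.
rewrite ffunE !eqxx supp_others_neg1_prof //= /lottery_reform.
have -> : mult negM2 (neg1_prof i k l) = 0%N.
  apply: neq_mult0 => j; rewrite ffunE.
  by case: (j == i) => //; case: (j == l) => //; case: (j < 2)%N.
have -> : mult neg1 (neg1_prof i k l) = 1%N.
  rewrite (@mult_setE _ _ [set l]) ?cards1 // => j; rewrite ffunE inE.
  have [->|_] := j =P i; first by rewrite (negbTE k1) eq_sym (negbTE li).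
  by case: (j == l) => //; case: (j < 2)%N.
rewrite agentsA_mult_ge2 // => j Aj; rewrite ffunE.
have [ji|_] := j =P i.
  by case/orP: supp_posk => [/eqP // | /andP[_]]; rewrite -ji Aj.
by rewrite (_ : (j == l) = false) ?Aj //; apply: contraNF Bl => /eqP <-.
Qed.

End PositiveReport.

Definition interim_count i k : R :=
  #|event_at sure_reform i k|%:R + lottery_weight * #|event_at lottery_reform i k|%:R.

Lemma interim_fstar0 i k : interim 0 fstar i k = (2^-1) ^+ n.-1 * interim_count i k.
Proof.
rewrite interim0E big_split /= -mulr_sumr !sumr_indicator /interim_count.
by congr (_ * (_%:R + _ * _%:R)); apply: eq_card => v; rewrite !inE andbA.
Qed.

Lemma lottery_weight_scale : lottery_weight * (n - 2)%N%:R = 1.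
Proof. by rewrite mulVf // pnatr_eq0; lia. Qed.

Lemma interim_countA i k : (i < 2)%N -> interim_count i k = if positive k then 2 else 0.
Proof.
move=> Ai; rewrite /interim_count; elim/type_ind: k => /=.
- by rewrite sure_negM2A // lottery_negM2A // cards0 mulr0 addr0.
- by rewrite sure_neg1 lottery_neg1A // cards0 mulr0 addr0.
- rewrite sure_pos1A // lottery_pos1A // cards0 mulr0 addr0 cards2.
  suff -> : pos_prof i pos1 != negA_prof i pos1 by [].
  apply/eqP => /(congr1 (fun w : profile n => w (partner i))).
  by rewrite !ffunE (negbTE (partner_neq Ai)) partnerA.
- rewrite sure_pos // lottery_pos // cards1 card_neg1_prof card_agentsBD1 Ai.
  by rewrite subn0 lottery_weight_scale.
Qed.

Lemma interim_countB i k : ~~ (i < 2)%N ->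
  interim_count i k = if positive k then 1 + lottery_weight * (n - 3)%N%:R else lottery_weight.
Proof.
move=> Bi; rewrite /interim_count; elim/type_ind: k => /=.
- by rewrite sure_negM2B // lottery_negM2B // cards0 cards1 mulr1 add0r.
- by rewrite sure_neg1 lottery_neg1B // cards0 cards1 mulr1 add0r.
- rewrite sure_pos ?Bi ?orbT // lottery_pos ?Bi ?orbT //.
  by rewrite cards1 card_neg1_prof card_agentsBD1 Bi -subnDA.
- by rewrite sure_pos // lottery_pos // cards1 card_neg1_prof card_agentsBD1 Bi -subnDA.
Qed.

Lemma BIC_two_levels (M : R) (I : 'I_4 -> R) L H : 0 <= M -> L <= H ->
  (forall k, I k = if positive k then H else L) ->
  forall k k', value M k * I k' <= value M k * I k.
Proof.
move=> M_ge0 LH IE k k'.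
have [Lk' k'H] : L <= I k' /\ I k' <= H by rewrite IE; case: positive.
rewrite [I k]IE; elim/type_ind: k => /=.
- by apply: ler_wnM2l Lk'; rewrite oppr_le0 sqr_ge0.
- by apply: ler_wnM2l Lk'; rewrite oppr_le0.
- by rewrite !mul1r.
- exact: ler_wpM2l.
Qed.

Lemma fstar_BIC (M : R) : 0 <= M -> BIC M 0 fstar.
Proof.
move=> M_ge0 i k k'; rewrite !interim_fstar0.
set c : R := (2^-1) ^+ n.-1.
have c_ge0 : 0 <= c by rewrite exprn_ge0 // invr_ge0.
pose I k := c * interim_count i k.
have [Ai | Bi] := boolP (i < 2)%N.
  apply: (@BIC_two_levels M I 0 (c * 2)) => // [|k0]; first exact: mulr_ge0.
  by rewrite /I interim_countA //; case: positive; rewrite ?mulr0.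
apply: (@BIC_two_levels M I (c * lottery_weight)
                             (c * (1 + lottery_weight * (n - 3)%N%:R))) => // [|k0].
  rewrite ler_wpM2l // -[X in X <= _]addr0 lerD ?lottery_weight_le1 //.
  by rewrite mulr_ge0 ?ler0n // ltW ?lottery_weight_gt0.
by rewrite /I interim_countB //; case: positive.
Qed.

Lemma sum_mult (F : 'I_4 -> R) v : \sum_j F (v j) = \sum_x (mult x v)%:R * F x.
Proof.
rewrite (partition_big v predT) //=; apply: eq_bigr => x _.
rewrite (eq_bigr (fun _ => F x)) => [|j /eqP-> //].
by rewrite sumr_const mulr_natl; congr (_ *+ _); apply: eq_card => j; rewrite !inE.
Qed.

Lemma value_gt0 (M : R) x : 0 < M -> (0 < value M x) = positive x.
Proof.
move=> M_gt0; elim/type_ind: x => /=; rewrite ?ltr01 //.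
- by rewrite oppr_gt0 ltNge sqr_ge0.
- by rewrite oppr_gt0 ltr10.
Qed.

Lemma unanimityE (M : R) v : 0 < M ->
  unanimity M v = ((mult negM2 v == 0%N) && (mult neg1 v == 0%N))%:R.
Proof.
move=> M_gt0; rewrite /unanimity !mult_eq0.
have -> : (#|chi M v| == n) = [forall j, positive (v j)].
  apply/eqP/forallP => [full j | allpos].
    have : chi M v = setT.
      by apply/eqP; rewrite eqEcard subsetT cardsT card_ord; exact: eq_leq (esym full).
    by move/setP/(_ j); rewrite !inE (value_gt0 _ M_gt0).
  rewrite (_ : chi M v = setT) ?cardsT ?card_ord //.
  by apply/setP => j; rewrite !inE (value_gt0 _ M_gt0) allpos.
suff -> : [forall j, positive (v j)] = [forall j, v j != negM2] && [forall j, v j != neg1].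
  by case: (_ && _).
apply/forallP/andP => [allpos | [/forallP no0 /forallP no1] j].
  by split; apply/forallP => j; move: (allpos j); case: (v j) => [[|[|[|[|?]]]] ?].
by move: (no0 j) (no1 j); case: (v j) => [[|[|[|[|?]]]] ?].
Qed.

Lemma supp_profile_others i v : supp_profile v -> supp_others i v.
Proof. by move=> /forallP supp; apply/forallP => j; apply/implyP. Qed.

Lemma supp_profileA v j : supp_profile v -> (j < 2)%N -> (v j == negM2) || (v j == posM).
Proof. by move=> /forallP /(_ j) + Aj; rewrite /supp_type Aj. Qed.

Lemma sure_reform_supp v : supp_profile v ->
  sure_reform v = (mult negM2 v == 0%N) && (mult neg1 v == 0%N).
Proof.
move=> supp; rewrite /sure_reform [RHS]andbC; case: (mult neg1 v == 0%N) => //=.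
apply/idP/idP => [/orP[// | /andP[/eqP c_negM2 /eqP c_posM]] | ->//].
have := agentsA_mult_ge2 (supp_othersB_negM2 (isT : ~~ (agent3 < 2)%N)
                            (supp_profile_others agent3 supp) c_posM).
by rewrite c_negM2.
Qed.

Lemma sum_value_lottery (M : R) v : supp_profile v -> lottery_reform v ->
  \sum_i value M (v i) = 2 * M + n%:R - 4.
Proof.
move=> supp; case/orP=> [/andP[/andP[/eqP c_negM2 /eqP c_neg1] _] | /andP[/eqP c_negM2 _]];
  last by have := @mult_le2A agent1 v negM2 (supp_profile_others _ supp) isT isT; rewrite c_negM2.
have c_posM : mult posM v = 2%N.
  rewrite -card_agentsA; apply: mult_setE => j; rewrite in_agentsA.
  have [Aj | Bj] := boolP (j < 2)%N.
    by apply/eqP; exact: eq_or_neql (supp_profileA supp Aj) (mult0_neq c_negM2 j).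
  by move: ((forallP supp) j); rewrite /supp_type (negbTE Bj); case: (v j) => [[|[|[|[|?]]]] ?].
have := sum_mult (fun=> 1) v; rewrite sum_I4 sumr_const card_ord c_negM2 c_neg1 c_posM !mulr1.
rewrite sum_mult sum_I4 c_negM2 c_neg1 c_posM /value /= => ->; lra.
Qed.

Lemma welfare_fstar_gt (M : R) : 0 < M -> condB n M ->
  welfare M 0 (unanimity M (n:=n)) < welfare M 0 fstar.
Proof.
move=> M_gt0 condBM; rewrite !welfare0E ltr_pM2l ?exprn_gt0 ?invr_gt0 //.
set S := fun v => \sum_i value M (v i).
have -> : \sum_(v | supp_profile v) fstar v * S v =
    \sum_(v | supp_profile v) unanimity M v * S v
    + lottery_weight * \sum_(v | supp_profile v && lottery_reform v) S v.
  rewrite big_mkcondr mulr_sumr -big_split /=; apply: eq_bigr => v supp.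
  rewrite /fstar sure_reform_supp // -(unanimityE _ M_gt0).
  by case: lottery_reform; rewrite ?mulr1 ?mulr0 ?addr0 // mulrDl.
rewrite ltrDl (eq_bigr (fun=> 2 * M + n%:R - 4)) => [|v /andP[]]; last exact: sum_value_lottery.
rewrite sumr_const mulr_gt0 ?lottery_weight_gt0 // pmulrn_lgt0.
  have n3 : (3%:R : R) <= n%:R by rewrite ler_nat.
  by move: condBM; rewrite /condB; lra.
apply/card_gt0P; exists (pos_prof agent3 neg1); rewrite unfold_in.
have : pos_prof agent3 neg1 \in event_at lottery_reform agent3 neg1.
  by rewrite lottery_neg1B ?set11.
case/event_atP => _ supp ->; rewrite andbT.
apply/forallP => j; have [->|ji] := eqVneq j agent3; first by rewrite ffunE eqxx.
exact: supp_othersP supp ji.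
Qed.

End Construction.

Theorem lemma5 (R : realFieldType) (n : nat) (M : R) :
  (3 <= n)%N -> 0 < M -> condA n M -> condB n M ->
  exists fstar : profile n -> R,
    [/\ is_SCF fstar, anonymous fstar, BIC M 0 fstar &
        welfare M 0 (unanimity M (n:=n)) < welfare M 0 fstar].
Proof.
move=> n_ge3 M_gt0 _ condBM; exists (@fstar R n); split.
- exact: fstar_SCF.
- exact: fstar_anonymous.
- exact/fstar_BIC/ltW.
- exact: welfare_fstar_gt.
Qed.
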